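(* Let $G$ be a finite undirected weighted graph on $V=\{1,\dots,n\}$ with symmetric nonnegative weights $w(ij)=w(ji)\ge 0$, degrees $d_i=\sum_{j=1}^n w(ij)$ with $\mathrm{vol}(V)=\sum_i d_i>0$, and a positive vertex measure $\mu_1,\dots,\mu_n>0$. Let $M$ be the normalized modularity matrix $M_{ij}=\frac{1}{\mu_i}\big(w(ij)-\frac{d_id_j}{\mathrm{vol}(V)}\big)$, let $\lambda_1(M)$ be its largest eigenvalue, and let $r_M(x)=\langle x,Mx\rangle_\mu/\|x\|_{2,\mu}^2$ for $x\neq 0$. Assume $\lambda_1(M)>0$. Then: (i) for every $A\subseteq V$, $r_M(\mathbb 1_A-\mathbb 1_{\overline A})=2\,q(A)$; (ii) for every $A\subseteq V$ with $\emptyset\neq A\neq V$, $r_M\big(\mathbb 1_A-\tfrac{\mu(A)}{\mu(V)}\mathbb 1\big)=q_\mu(A)$; (iii) $\max_{x\neq 0,\ \langle x,\mathbb 1\rangle_\mu=0} r_M(x)=\max_{x\neq 0} r_M(x)=\lambda_1(M)$. In this sense $r_M$ is a (linear) relaxation of both $q$ and $q_\mu$.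
   Context: $\langle x,y\rangle_\mu=\sum_i\mu_ix_iy_i$, $\|x\|_{2,\mu}^2=\langle x,x\rangle_\mu$; $M$ is self-adjoint for $\langle\cdot,\cdot\rangle_\mu$, so its eigenvalues are real. $\mathbb 1$ is the all-ones vector, $\mathbb 1_A$ the indicator vector of $A$, $\overline A=V\setminus A$, $\mu(A)=\sum_{i\in A}\mu_i$, $\mathrm{vol}(A)=\sum_{i\in A}d_i$. Modularity of $A$: $Q(A)=\sum_{i,j\in A}w(ij)-\mathrm{vol}(A)^2/\mathrm{vol}(V)$. Modularity set function $q(A)=\frac{2}{\mu(V)}Q(A)$ and normalized modularity $q_\mu(A)=\mu(V)\frac{Q(A)}{\mu(A)\mu(\overline A)}$ (for $\emptyset\ne A\ne V$). *)

From HB Require Import structures.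
From mathcomp Require Import all_boot all_order all_algebra.
From mathcomp Require Import reals.
Set Implicit Arguments. Unset Strict Implicit. Unset Printing Implicit Defensive.
Import Order.TTheory GRing.Theory Num.Theory.
Local Open Scope ring_scope.

Section Modularity.
Variables (R : realType) (n : nat).
Variables (w : 'I_n -> 'I_n -> R) (mu : 'I_n -> R).

Definition deg (i : 'I_n) : R := \sum_(j < n) w i j.
Definition vol (A : {set 'I_n}) : R := \sum_(i in A) deg i.
Definition musum (A : {set 'I_n}) : R := \sum_(i in A) mu i.

Definition modmx : 'M[R]_n :=
  \matrix_(i, j) ((w i j - deg i * deg j / vol setT) / mu i).

Definition mudot (x y : 'cV[R]_n) : R := \sum_(i < n) mu i * x i 0 * y i 0.

Definition rayleigh (x : 'cV[R]_n) : R := mudot x (modmx *m x) / mudot x x.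

Definition indic (A : {set 'I_n}) : 'cV[R]_n :=
  \col_i (if i \in A then 1 else 0).
Definition ones : 'cV[R]_n := \col_i 1.

Definition Qmod (A : {set 'I_n}) : R :=
  \sum_(i in A) \sum_(j in A) w i j - vol A ^+ 2 / vol setT.
Definition qmod (A : {set 'I_n}) : R := 2 / musum setT * Qmod A.
Definition qmu (A : {set 'I_n}) : R :=
  musum setT * Qmod A / (musum A * musum (~: A)).

End Modularity.

Definition largest_eigenvalue (R : realType) (n : nat) (M : 'M[R]_n) (lam : R) :=
  eigenvalue M lam /\ (forall b : R, eigenvalue M b -> b <= lam).

Definition is_max_over (T : Type) (R : realType) (P : T -> Prop) (f : T -> R) (v : R) :=
  (exists2 x, P x & f x = v) /\ (forall x, P x -> f x <= v).

(* The quadratic form of B = W - d d^T / vol(V) is <x, M x>_mu = x^T B x. As B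
   is symmetric with B 1 = 0, this form does not change when a multiple of 1 is
   added to x, so at x = a (1_A - c 1) it equals a^2 1_A^T B 1_A = a^2 Q(A);
   dividing by ||x||_mu^2 = a^2 (mu(A) (1 - c)^2 + mu(~A) c^2) gives (i) with
   a = 2, c = 1/2 and (ii) with a = 1, c = mu(A) / mu(V).
   For (iii), M = D_mu^-1 B is similar to the symmetric D_mu^-1/2 B D_mu^-1/2,
   whose largest eigenvalue bounds its Rayleigh quotient by the spectral theorem
   (available for hermitian matrices, hence applied to the complexification).
   So r_M <= lambda_1, with equality at an eigenvector x; and
   <x, 1>_mu = <M x, 1>_mu / lambda_1 = 0 because 1^T B = 0, which gives the
   constrained maximum as well. *)

From HB Require Import structures.
From mathcomp Require Import all_boot all_order all_algebra.
From mathcomp Require Import reals complex.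
From mathcomp Require Import ring.
Import Order.TTheory GRing.Theory Num.Theory.
Local Open Scope ring_scope.
Set Implicit Arguments. Unset Strict Implicit. Unset Printing Implicit Defensive.

Local Open Scope sesquilinear_scope.

Section HermitianSpectralBound.
Variables (C : numClosedFieldType) (n : nat) (A : 'M[C]_n).
Hypothesis A_herm : A \is hermsymmx.
Local Notation P := (spectralmx A).
Local Notation d := (spectral_diag A).

Let A_spectral : A = P^t* *m diag_mx d *m P.
Proof.
rewrite -invmx_unitary ?spectral_unitarymx //.
exact/orthomx_spectralP/hermitian_normalmx.
Qed.

Let PPt : P *m P^t* = 1%:M.
Proof. exact/unitarymxP/spectral_unitarymx. Qed.

Let PtP : P^t* *m P = 1%:M.
Proof. by rewrite -invmx_unitary ?spectral_unitarymx // mulVmx ?spectral_unit. Qed.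

Lemma spectral_diag_eigenvalue k : eigenvalue A (d 0 k).
Proof.
apply/eigenvalueP; exists (row k P).
  rewrite !rowE {2}A_spectral !mulmxA -(mulmxA _ P) PPt mulmx1 scalemxAl.
  congr (_ *m P); apply/rowP => j; rewrite mul_mx_diag !mxE eqxx /=.
  by case: eqP => [->|_]; rewrite ?mulr1 ?mul1r ?mul0r ?mulr0.
apply/eqP => /(congr1 (fun v => v *m P^t*)); rewrite -row_mul PPt mul0mx.
by move/rowP/(_ k); rewrite !mxE eqxx /= => /eqP; rewrite oner_eq0.
Qed.

Lemma hermitian_form_le b : (forall k, d 0 k <= b) ->
  forall x : 'rV_n, (x *m A *m x^t*) 0 0 <= b * (x *m x^t*) 0 0.
Proof.
move=> d_le x; set y := x *m P^t*.
have yt : y^t* = P *m x^t* by rewrite /y trmx_mul map_mxM trmxCK.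
have -> : x *m A *m x^t* = y *m diag_mx d *m y^t*.
  by rewrite yt {1}A_spectral /y !mulmxA.
have -> : x *m x^t* = y *m y^t*.
  by rewrite yt /y !mulmxA -(mulmxA x) PtP mulmx1.
rewrite mul_mx_diag !mxE big_distrr /=; apply: ler_sum => j _.
rewrite !mxE mulrAC [X in _ <= X]mulrC.
by apply: ler_wpM2l; [exact: mul_conjC_ge0 | exact: d_le].
Qed.

End HermitianSpectralBound.

Lemma symmetric_max_eigenvalue (R : rcfType) n (S : 'M[R]_n) :
  S^T = S -> (0 < n)%N ->
  exists2 r, eigenvalue S r &
    forall x : 'rV_n, (x *m S *m x^T) 0 0 <= r * (x *m x^T) 0 0.
Proof.
move=> S_sym n_gt0; pose f := real_complex R; pose Sc := map_mx f S.
have Sc_herm : Sc \is hermsymmx.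
  apply: realsym_hermsym; last by apply/mxOverP => i j; rewrite mxE complex_real.
  by apply/is_hermitianmxP; rewrite expr0 scale1r map_mx_id // map_trmx S_sym.
pose d := spectral_diag Sc.
have d_real i : f (complex.Re (d 0 i)) = d 0 i.
  apply: RRe_real; exact: mxOverP (hermitian_spectral_diag_real Sc_herm) _ _.
have [k _ k_max] := @arg_maxP _ R _ (Ordinal n_gt0) xpredT
   (fun i => complex.Re (d 0 i)) isT.
exists (complex.Re (d 0 k)).
  by have := spectral_diag_eigenvalue Sc_herm k; rewrite -d_real eigenvalue_map.
move=> x; rewrite -lecR.
have xT : (map_mx f x)^t* = map_mx f x^T.
  by apply/matrixP => i j; rewrite !mxE conj_Creal // complex_real.
have := hermitian_form_le Sc_herm (b := f (complex.Re (d 0 k))).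
move/(_ _ (map_mx f x)); rewrite xT -!map_mxM !mxE -rmorphM.
by apply => i; rewrite -(d_real i) lecR; exact: k_max.
Qed.

Local Close Scope sesquilinear_scope.

Lemma char_poly_trmx (R : comNzRingType) n (A : 'M[R]_n) :
  char_poly A^T = char_poly A.
Proof.
by rewrite /char_poly -det_tr /char_poly_mx linearB /= tr_scalar_mx map_trmx trmxK.
Qed.

Lemma eigenvalue_trmx (F : fieldType) n (A : 'M[F]_n) a :
  eigenvalue A^T a = eigenvalue A a.
Proof. by rewrite !eigenvalue_root_char char_poly_trmx. Qed.

Lemma eigenvalue_colP (F : fieldType) n (A : 'M[F]_n) a : eigenvalue A a ->
  exists2 x : 'cV_n, x != 0 & A *m x = a *: x.
Proof.
rewrite -eigenvalue_trmx => /eigenvalueP [v vA v_neq0]; exists v^T.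
  by rewrite trmx_eq0.
by rewrite -[A]trmxK -trmx_mul vA linearZ.
Qed.

Lemma trmx_mul_kernel (R : comNzRingType) n (B : 'M[R]_n) (u : 'cV_n) :
  B^T = B -> B *m u = 0 -> u^T *m B = 0.
Proof. by move=> B_sym Bu; rewrite -B_sym -trmx_mul Bu trmx0. Qed.

Lemma form_add_kernel (R : comNzRingType) n (B : 'M[R]_n) (x u : 'cV_n) :
  B^T = B -> B *m u = 0 ->
  ((x + u)^T *m B *m (x + u)) 0 0 = (x^T *m B *m x) 0 0.
Proof.
move=> B_sym Bu; have uB := trmx_mul_kernel B_sym Bu.
by rewrite -mulmxA mulmxDr Bu addr0 mulmxA linearD /= mulmxDl uB addr0.
Qed.

Lemma formZ (R : comNzRingType) n (B : 'M[R]_n) (x : 'cV_n) a :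
  ((a *: x)^T *m B *m (a *: x)) 0 0 = a ^+ 2 * (x^T *m B *m x) 0 0.
Proof. by rewrite !linearZ /= -!scalemxAl scalerA mxE expr2. Qed.

Section WeightedInnerProduct.
Variables (R : realType) (n : nat) (mu : 'I_n -> R).

Lemma mudotC x y : mudot mu x y = mudot mu y x.
Proof. by apply: eq_bigr => i _; rewrite mulrAC. Qed.

Lemma mudotZr a x y : mudot mu x (a *: y) = a * mudot mu x y.
Proof. by rewrite mulr_sumr; apply: eq_bigr => i _; rewrite mxE; ring. Qed.

Lemma mudotZl a x y : mudot mu (a *: x) y = a * mudot mu x y.
Proof. by rewrite mudotC mudotZr mudotC. Qed.

Definition rowdivmx (B : 'M[R]_n) : 'M[R]_n := \matrix_(i, j) (B i j / mu i).

Hypothesis mu_gt0 : forall i, 0 < mu i.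

Lemma musum_gt0 A : A != set0 -> 0 < musum mu A.
Proof.
case/set0Pn => i iA; rewrite /musum (bigD1 i) //= ltr_pwDl ?sumr_ge0 // => j _.
exact: ltW.
Qed.

Lemma mudot_gt0 x : x != 0 -> 0 < mudot mu x x.
Proof.
move=> x_neq0; have [i xi_neq0] : exists i, x i 0 != 0.
  apply/existsP; apply: contraNT x_neq0; rewrite negb_exists => /forallP x0.
  by apply/eqP/colP => i; rewrite mxE; apply/eqP/negbNE/x0.
rewrite /mudot (bigD1 i) //= ltr_pwDl ?sumr_ge0 // => [|j _].
  by rewrite -mulrA mulr_gt0 // -expr2 exprn_even_gt0 ?xi_neq0 ?orbT.
by rewrite -mulrA -expr2 mulr_ge0 ?sqr_ge0 ?ltW ?mu_gt0.
Qed.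

Lemma mudot_rowdivmx B x y : mudot mu x (rowdivmx B *m y) = (x^T *m B *m y) 0 0.
Proof.
rewrite mxE; under [RHS]eq_bigr do rewrite mxE big_distrl /=.
rewrite exchange_big /=; apply: eq_bigr => i _; rewrite mxE mulr_sumr.
apply: eq_bigr => j _; rewrite !mxE; field; exact: lt0r_neq0.
Qed.

Lemma musum_split A : musum mu setT = musum mu A + musum mu (~: A).
Proof.
rewrite /musum (eq_bigl xpredT) => [|i]; last by rewrite in_setT.
by rewrite (bigID (mem A)) /=; congr (_ + _); apply: eq_bigl => i; rewrite in_setC.
Qed.

Lemma mudot_indic_shift A c :
  mudot mu (indic R A - c *: ones R n) (indic R A - c *: ones R n)
  = musum mu A * (1 - c) ^+ 2 + musum mu (~: A) * c ^+ 2.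
Proof.
rewrite /mudot (bigID (mem A)) /= !mulr_suml; congr (_ + _).
  by apply: eq_bigr => i iA; rewrite !mxE iA; ring.
apply: eq_big => [i|i iNA]; first by rewrite in_setC.
by rewrite !mxE (negbTE iNA); ring.
Qed.

Section Symmetrization.
Variable B : 'M[R]_n.
Hypothesis B_sym : B^T = B.

Let s i := Num.sqrt (mu i).
Let s_neq0 i : s i != 0. Proof. by rewrite sqrtr_eq0 -ltNge. Qed.
Let s_sqr i : s i ^+ 2 = mu i. Proof. by rewrite sqr_sqrtr // ltW. Qed.

Let Bs := \matrix_(i, j) (B i j / (s i * s j)).
Let rescale (x : 'cV[R]_n) : 'rV[R]_n := \row_i (s i * x i 0).

Let Bs_sym : Bs^T = Bs.
Proof.
apply/matrixP => i j; rewrite !mxE (mulrC (s j)).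
by have /matrixP/(_ j i) := B_sym; rewrite mxE => ->.
Qed.

Let rescale_form x :
  (rescale x *m Bs *m (rescale x)^T) 0 0 = (x^T *m B *m x) 0 0.
Proof.
rewrite /rescale /Bs !mxE; apply: eq_bigr => j _; rewrite !mxE !big_distrl /=.
apply: eq_bigr => i _; rewrite !mxE.
by field; rewrite s_neq0 s_neq0.
Qed.

Let rescale_norm x : (rescale x *m (rescale x)^T) 0 0 = mudot mu x x.
Proof. by rewrite mxE; apply: eq_bigr => i _; rewrite !mxE -s_sqr; ring. Qed.

Let eigenvalue_rescale r : eigenvalue Bs r -> eigenvalue (rowdivmx B) r.
Proof.
move=> /eigenvalueP [v vBs v_neq0]; apply/eigenvalueP.
exists (\row_j (v 0 j * s j)).
  apply/rowP => j; have /rowP/(_ j) := vBs; rewrite !mxE => vBs_j.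
  transitivity (s j * \sum_i v 0 i * Bs i j).
    rewrite mulr_sumr; apply: eq_bigr => i _; rewrite !mxE -s_sqr.
    by field; rewrite s_neq0 s_neq0.
  by rewrite vBs_j mulrC -mulrA.
apply: contraNneq v_neq0 => /rowP v0; apply/eqP/rowP => j.
by have /eqP := v0 j; rewrite !mxE mulf_eq0 (negbTE (s_neq0 j)) orbF => /eqP.
Qed.

Lemma rowdivmx_max_eigenvalue : (0 < n)%N ->
  exists2 r, eigenvalue (rowdivmx B) r &
    forall x, mudot mu x (rowdivmx B *m x) <= r * mudot mu x x.
Proof.
move=> n_gt0; have [r Bs_r r_max] := symmetric_max_eigenvalue Bs_sym n_gt0.
exists r => [|x]; first exact: eigenvalue_rescale.
by rewrite mudot_rowdivmx -rescale_form -rescale_norm.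
Qed.

End Symmetrization.

End WeightedInnerProduct.

Lemma form_indic (R : realType) n (B : 'M[R]_n) (A : {set 'I_n}) :
  ((indic R A)^T *m B *m indic R A) 0 0 = \sum_(i in A) \sum_(j in A) B i j.
Proof.
rewrite exchange_big mxE [RHS]big_mkcond; apply: eq_bigr => j _ /=.
rewrite !mxE; case: (j \in A); last by rewrite mulr0.
rewrite mulr1 [RHS]big_mkcond; apply: eq_bigr => i _ /=.
by rewrite !mxE; case: (i \in A); rewrite ?mul1r ?mul0r.
Qed.

Section ModularityMatrix.
Variables (R : realType) (n : nat) (w : 'I_n -> 'I_n -> R) (mu : 'I_n -> R).
Hypothesis w_sym : forall i j, w i j = w j i.
Hypothesis vol_gt0 : 0 < vol w setT.
Hypothesis mu_gt0 : forall i, 0 < mu i.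

Definition modularity_mx : 'M[R]_n :=
  \matrix_(i, j) (w i j - deg w i * deg w j / vol w setT).

Lemma modmxE : modmx w mu = rowdivmx mu modularity_mx.
Proof. by apply/matrixP => i j; rewrite !mxE. Qed.

Lemma modularity_mx_sym : modularity_mx^T = modularity_mx.
Proof. by apply/matrixP => i j; rewrite !mxE w_sym (mulrC (deg w i)). Qed.

Lemma modularity_mx_ones : modularity_mx *m ones R n = 0.
Proof.
apply/colP => i; rewrite !mxE.
under eq_bigr do rewrite !mxE mulr1.
rewrite sumrB -mulr_suml -mulr_sumr.
have -> : \sum_j deg w j = vol w setT by apply: eq_bigl => j; rewrite in_setT.
by rewrite mulfK ?subrr // lt0r_neq0.
Qed.

Lemma modularity_form_indic A :
  ((indic R A)^T *m modularity_mx *m indic R A) 0 0 = Qmod w A.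
Proof.
rewrite form_indic /Qmod.
under eq_bigr do under eq_bigr do rewrite mxE.
under eq_bigr do rewrite sumrB.
rewrite sumrB; congr (_ - _).
rewrite expr2 /vol -mulrA mulr_suml; apply: eq_bigr => i _.
by rewrite -mulr_suml -mulr_sumr mulrA.
Qed.

Lemma rayleigh_scaled_indic A a c : a != 0 ->
  rayleigh w mu (a *: (indic R A - c *: ones R n))
  = Qmod w A / (musum mu A * (1 - c) ^+ 2 + musum mu (~: A) * c ^+ 2).
Proof.
move=> a_neq0; rewrite /rayleigh modmxE mudot_rowdivmx // formZ.
rewrite form_add_kernel ?modularity_mx_sym //; last first.
  by rewrite mulmxN -scalemxAr modularity_mx_ones scaler0 oppr0.
rewrite modularity_form_indic mudotZl mudotZr mulrA -expr2 mudot_indic_shift.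
by rewrite -mulf_div divff ?mul1r // expf_neq0.
Qed.

Let n_gt0 : (0 < n)%N.
Proof.
by case: n w vol_gt0 => // w0; rewrite /vol big_pred0 ?ltxx // => -[].
Qed.

Lemma rayleigh_indic_sign A :
  rayleigh w mu (indic R A - indic R (~: A)) = 2 * qmod w mu A.
Proof.
have -> : indic R A - indic R (~: A) = 2 *: (indic R A - 2^-1 *: ones R n).
  by apply/colP => i; rewrite !mxE in_setC; case: (i \in A) => /=; field.
have : 0 < musum mu setT.
  by apply: musum_gt0 => //; apply/set0Pn; exists (Ordinal n_gt0).
rewrite rayleigh_scaled_indic ?pnatr_eq0 // /qmod (musum_split mu A) => mu_pos.
by field; rewrite lt0r_neq0.
Qed.

Lemma rayleigh_indic_centered A : A != set0 -> A != setT ->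
  rayleigh w mu (indic R A - (musum mu A / musum mu setT) *: ones R n)
  = qmu w mu A.
Proof.
move=> A_neq0 A_neqT; have CA_neq0 : ~: A != set0.
  by apply: contraNneq A_neqT => CA0; rewrite -(setCK A) CA0 setC0.
have := musum_gt0 mu_gt0 A_neq0; have := musum_gt0 mu_gt0 CA_neq0.
rewrite -[indic _ _ - _]scale1r rayleigh_scaled_indic ?oner_neq0 //.
rewrite /qmu (musum_split mu A).
set a := musum mu A; set b := musum mu (~: A) => b_gt0 a_gt0.
have ab_neq0 : a + b != 0 by rewrite lt0r_neq0 // addr_gt0.
have -> : a * (1 - a / (a + b)) ^+ 2 + b * (a / (a + b)) ^+ 2 = a * b / (a + b).
  by field.
by field; rewrite ab_neq0 !lt0r_neq0.
Qed.

Lemma mudot_ones_modmx x : mudot mu (ones R n) (modmx w mu *m x) = 0.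
Proof.
rewrite modmxE mudot_rowdivmx // trmx_mul_kernel ?mul0mx ?mxE //.
  exact: modularity_mx_sym.
exact: modularity_mx_ones.
Qed.

Lemma rayleigh_le_largest lam : largest_eigenvalue (modmx w mu) lam ->
  forall x, x != 0 -> rayleigh w mu x <= lam.
Proof.
move=> [_ lam_max] x x_neq0.
have [r] := rowdivmx_max_eigenvalue mu_gt0 modularity_mx_sym n_gt0.
rewrite -modmxE => /lam_max r_le_lam /(_ x) r_max.
rewrite /rayleigh ler_pdivrMr ?mudot_gt0 //; apply: le_trans r_max _.
by rewrite ler_wpM2r // ltW // mudot_gt0.
Qed.

Lemma rayleigh_eigenvector lam x : x != 0 -> modmx w mu *m x = lam *: x ->
  rayleigh w mu x = lam.
Proof.
by move=> x_neq0 Mx; rewrite /rayleigh Mx mudotZr mulfK // lt0r_neq0 // mudot_gt0.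
Qed.

Lemma eigenvector_mu_orthogonal lam x : lam != 0 ->
  modmx w mu *m x = lam *: x -> mudot mu x (ones R n) = 0.
Proof.
move=> lam_neq0 Mx; have := mudot_ones_modmx x.
by rewrite Mx mudotZr mudotC => /eqP; rewrite mulf_eq0 (negbTE lam_neq0) => /eqP.
Qed.

End ModularityMatrix.

Theorem proposition2p2 (R : realType) (n : nat)
    (w : 'I_n -> 'I_n -> R) (mu : 'I_n -> R)
    (w_sym : forall i j, w i j = w j i)
    (w_ge0 : forall i j, 0 <= w i j)
    (vol_gt0 : 0 < vol w setT)
    (mu_gt0 : forall i, 0 < mu i)
    (lam : R)
    (lam_max : largest_eigenvalue (modmx w mu) lam)
    (lam_gt0 : 0 < lam) :
  (forall A : {set 'I_n},
     rayleigh w mu (indic R A - indic R (~: A)) = 2 * qmod w mu A) /\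
  (forall A : {set 'I_n}, A != set0 -> A != setT ->
     rayleigh w mu (indic R A - (musum mu A / musum mu setT) *: ones R n)
       = qmu w mu A) /\
  is_max_over (fun x : 'cV[R]_n => x != 0 /\ mudot mu x (ones R n) = 0)
      (rayleigh w mu) lam /\
  is_max_over (fun x : 'cV[R]_n => x != 0) (rayleigh w mu) lam.
Proof.
have [x x_neq0 Mx] := eigenvalue_colP lam_max.1.
have rx : rayleigh w mu x = lam := rayleigh_eigenvector mu_gt0 x_neq0 Mx.
have x_orth := eigenvector_mu_orthogonal w_sym vol_gt0 mu_gt0 (lt0r_neq0 lam_gt0) Mx.
have le_lam := rayleigh_le_largest w_sym vol_gt0 mu_gt0 lam_max.
split; first exact: rayleigh_indic_sign.
split; first exact: rayleigh_indic_centered.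
split; split.
- by exists x.
- by move=> y [y_neq0 _]; apply: le_lam.
- by exists x.
- exact: le_lam.
Qed.
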